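(* For every $n\ge1$ there is a one-to-one correspondence between the set of linked partitions of $[n]$ and the set of increasing trees on the $n+1$ labeled vertices $0,1,\dots,n$.
   Context: Two finite sets of integers $E,F$ are nearly disjoint if for every $i\in E\cap F$ either ($i=\min(E)$, $|E|>1$, $i\ne\min(F)$) or ($i=\min(F)$, $|F|>1$, $i\ne\min(E)$). A linked partition of $[n]$ is a set of nonempty subsets (blocks) of $[n]$ with union $[n]$, any two distinct blocks nearly disjoint (no noncrossing condition). An increasing tree on vertices $0,1,\dots,n$ is a tree rooted at $0$ in which every child has a larger label than its parent. *)

From mathcomp Require Import all_boot.
Set Implicit Arguments. Unset Strict Implicit. Unset Printing Implicit Defensive.

(* The ground set [n] = {1,...,n} is represented inside 'I_n.+1 = {0,...,n}
   as the elements i with 0 < i; vertex set of trees is all of 'I_n.+1. *)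
Definition ground (n : nat) : {set 'I_n.+1} := [set i : 'I_n.+1 | 0 < i].

Definition is_min (m : nat) (E : {set 'I_m}) (i : 'I_m) : bool :=
  (i \in E) && [forall j in E, i <= j].

Definition nearly_disjoint (m : nat) (E F : {set 'I_m}) : bool :=
  [forall i in E :&: F,
     (is_min E i && (1 < #|E|) && ~~ is_min F i)
  || (is_min F i && (1 < #|F|) && ~~ is_min E i)].

Definition linked_partition (n : nat) (P : {set {set 'I_n.+1}}) : Prop :=
  [/\ forall B, B \in P -> B != set0 /\ B \subset ground n,
      \bigcup_(B in P) B = ground n &
      forall B C, B \in P -> C \in P -> B != C -> nearly_disjoint B C].

Definition adj (n : nat) (E : {set {set 'I_n.+1}}) : rel 'I_n.+1 :=
  fun x y => (x != y) && ([set x; y] \in E).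

Definition is_tree (n : nat) (E : {set {set 'I_n.+1}}) : Prop :=
  [/\ forall e, e \in E -> #|e| = 2,
      forall x y, connect (adj E) x y
    & ~ exists c : seq 'I_n.+1,
          [/\ uniq c, 3 <= size c & cycle (adj E) c]].

(* Rooted at 0, every child has a larger label than its parent:
   equivalently stated as: along every simple path starting at the root 0
   the labels increase (the parent of v is its predecessor on the unique
   simple path from 0 to v). *)
Definition increasing_tree (n : nat) (E : {set {set 'I_n.+1}}) : Prop :=
  is_tree E /\
  forall p : seq 'I_n.+1, path (adj E) ord0 p -> uniq (ord0 :: p) ->
    sorted (fun a b : 'I_n.+1 => a < b) (ord0 :: p).

From mathcomp Require Import all_boot.
From Stdlib Require Import ProofIrrelevance.
Set Implicit Arguments. Unset Strict Implicit. Unset Printing Implicit Defensive.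

(* Both sides are in bijection with the parent functions on {0, ..., n}: maps f
   with f 0 = 0 and f v < v for v > 0.  An increasing tree is the tree with
   edges {v, f v}; conversely f v is the unique neighbour of v smaller than v.
   A linked partition has blocks {j} u f^-1(j) for every j > 0 with children,
   plus the singletons {j} of the childless j with f j = 0; conversely f i is
   the minimum of the block containing i as a non-minimal element (0 if there
   is none).  Near-disjointness says exactly that each i is the minimum of at
   most one block and a non-minimal element of at most one block, and that a
   singleton block meets no other block. *)

Lemma ord_neq0 n (v : 'I_n.+1) : (v != ord0) = (0 < v).
Proof. by case: v => [[|m] ?]. Qed.

Lemma in_ground n (v : 'I_n.+1) : (v \in ground n) = (v != ord0).
Proof. by rewrite inE ord_neq0. Qed.

Lemma sorted_le_last k (s : seq 'I_k) x y :
  sorted (fun a b : 'I_k => a < b) (x :: s) -> y \in x :: s -> y <= last x s.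
Proof.
elim: s x y => [|z s IHs] x y /=; first by rewrite inE => _ /eqP->.
case/andP=> xz zs; rewrite in_cons => /predU1P[->|]; last exact: IHs.
exact: leq_trans (ltnW xz) (IHs z z zs (mem_head _ _)).
Qed.

Lemma acyclic_of_lower_neighbor_uniq k (e : rel 'I_k) :
  symmetric e ->
  (forall x y z, e x z -> e y z -> x < z -> y < z -> x = y) ->
  ~ exists c, [/\ uniq c, 3 <= size c & cycle e c].
Proof.
move=> e_sym lower_uniq [c [uc sc cc]].
(* A maximal vertex m of the cycle would have two distinct smaller neighbours. *)
have [x0 x0c] : exists x0, x0 \in c.
  by case: c sc {uc cc} => // x c _; exists x; rewrite mem_head.
have [m mc m_max] := @arg_maxnP _ x0 (mem c) val x0c.
have [i [|a [|b t]] rot_c] := rot_to mc; rewrite -(size_rot i) rot_c // in sc.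
have lt_m y : y \in [:: m, a, b & t] -> y != m -> y < m.
  by rewrite -rot_c mem_rot => /m_max y_le ym; rewrite ltn_neqAle ym; exact: y_le.
have /andP[m_notin /andP[a_notin _]] : uniq [:: m, a, b & t].
  by rewrite -rot_c rot_uniq.
have : cycle e [:: m, a, b & t] by rewrite -rot_c rot_cycle.
rewrite /= rcons_path => /and4P[ema _ _ elm].
set l := last b t in elm.
have l_in : l \in b :: t by rewrite mem_last.
have am : a != m by apply: contraNneq m_notin => <-; rewrite mem_head.
have lm : l != m by apply: contraNneq m_notin => <-; rewrite inE l_in orbT.
have a_lt : a < m by apply: lt_m; rewrite // !inE eqxx orbT.
have l_lt : l < m by apply: lt_m; rewrite // !inE -in_cons l_in !orbT.
rewrite e_sym in ema.
by move: a_notin; rewrite (lower_uniq _ _ _ ema elm a_lt l_lt) l_in.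
Qed.

Section Minimum.

Variables (m : nat) (E : {set 'I_m}).

Lemma is_min_mem x : is_min E x -> x \in E.
Proof. by case/andP. Qed.

Lemma is_min_uniq x y : is_min E x -> is_min E y -> x = y.
Proof.
case/andP=> xE /forall_inP x_min /andP[yE /forall_inP y_min].
by apply: val_inj; apply/eqP; rewrite eqn_leq x_min // y_min.
Qed.

Lemma is_min_exists : E != set0 -> exists x, is_min E x.
Proof.
case/set0Pn => x0 x0E; have [x xE x_min] := arg_minnP val x0E.
by exists x; apply/andP; split => //; apply/forall_inP.
Qed.

End Minimum.

Lemma nearly_disjoint_mem m (E F : {set 'I_m}) x :
  nearly_disjoint E F -> x \in E -> x \in F ->
  is_min E x && (1 < #|E|) && ~~ is_min F x || is_min F x && (1 < #|F|) && ~~ is_min E x.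
Proof. by move=> /forall_inP EF xE xF; apply: EF; rewrite inE xE. Qed.

Lemma sig_bijective (T U : Type) (P : T -> Prop) (Q : U -> Prop)
    (F : T -> U) (G : U -> T) :
  (forall x, P x -> Q (F x)) -> (forall y, Q y -> P (G y)) ->
  (forall x, P x -> G (F x) = x) -> (forall y, Q y -> F (G y) = y) ->
  exists h : {x | P x} -> {y | Q y}, bijective h.
Proof.
move=> PQ QP FK GK.
exists (fun x => exist Q (F (sval x)) (PQ _ (svalP x))).
exists (fun y => exist P (G (sval y)) (QP _ (svalP y))).
- by case=> x Px; apply: eq_sig_hprop => [? ? ?|]; [exact: proof_irrelevance | exact: FK].
- by case=> y Qy; apply: eq_sig_hprop => [? ? ?|]; [exact: proof_irrelevance | exact: GK].
Qed.

Lemma adj_sym n (E : {set {set 'I_n.+1}}) : symmetric (adj E).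
Proof. by move=> x y; rewrite /adj eq_sym setUC. Qed.

Definition parent_fun n (f : {ffun 'I_n.+1 -> 'I_n.+1}) : bool :=
  [forall v, if v == ord0 then f v == ord0 else f v < v].

Section ParentFun.

Variables (n : nat) (f : {ffun 'I_n.+1 -> 'I_n.+1}).
Hypothesis pf : parent_fun f.

Lemma parent_fun_root : f ord0 = ord0.
Proof. by move: pf => /forallP /(_ ord0); rewrite eqxx => /eqP. Qed.

Lemma parent_fun_lt v : v != ord0 -> f v < v.
Proof. by move: pf => /forallP /(_ v) + /negbTE v0; rewrite v0. Qed.

Lemma parent_fun_neq v : v != ord0 -> f v != v.
Proof. by move=> /parent_fun_lt; apply: contraTneq => ->; rewrite ltnn. Qed.

End ParentFun.

Definition tree_of n (f : {ffun 'I_n.+1 -> 'I_n.+1}) : {set {set 'I_n.+1}} :=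
  [set [set v; f v] | v in ground n].

Definition tree_parent n (E : {set {set 'I_n.+1}}) : {ffun 'I_n.+1 -> 'I_n.+1} :=
  [ffun v => if v == ord0 then ord0 else odflt ord0 [pick u | adj E u v && (u < v)]].

Section TreeOf.

Variables (n : nat) (f : {ffun 'I_n.+1 -> 'I_n.+1}).
Hypothesis pf : parent_fun f.

Lemma adj_tree_of x y :
  adj (tree_of f) x y = (x != ord0) && (y == f x) || (y != ord0) && (x == f y).
Proof.
apply/andP/idP => [[xy /imsetP[v]] | ].
  rewrite in_ground => v0 e.
  have x_in : x \in [set v; f v] by rewrite -e set21.
  have y_in : y \in [set v; f v] by rewrite -e set22.
  by case/set2P: x_in y_in xy => -> /set2P[]->; rewrite ?eqxx ?v0 ?orbT.
case/orP=> /andP[v0 /eqP->]; split.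
- by rewrite eq_sym parent_fun_neq.
- by apply/imsetP; exists x; rewrite ?in_ground.
- by rewrite parent_fun_neq.
- by apply/imsetP; exists y; rewrite ?in_ground // setUC.
Qed.

Lemma adj_tree_of_lt x y : adj (tree_of f) x y -> x < y -> x = f y.
Proof.
rewrite adj_tree_of => /orP[/andP[x0 /eqP yfx] | /andP[_ /eqP //]].
by rewrite yfx ltnNge ltnW ?parent_fun_lt.
Qed.

Lemma connect_tree_of_root v : connect (adj (tree_of f)) ord0 v.
Proof.
have [k] := ubnP v; elim: k v => // k IHk v v_lt.
have [->|v0] := eqVneq v ord0; first exact: connect0.
apply: connect_trans (IHk _ (leq_trans (parent_fun_lt pf v0) v_lt)) (connect1 _).
by rewrite adj_sym adj_tree_of v0 eqxx.
Qed.

Lemma tree_of_tree : is_tree (tree_of f).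
Proof.
split.
- move=> e /imsetP[v]; rewrite in_ground => v0 ->.
  by rewrite cards2 eq_sym parent_fun_neq.
- move=> x y; apply: connect_trans (connect_tree_of_root y).
  by rewrite (sym_connect_sym (@adj_sym _ _)) connect_tree_of_root.
- apply: acyclic_of_lower_neighbor_uniq; first exact: adj_sym.
  by move=> x y z /adj_tree_of_lt xz /adj_tree_of_lt yz /xz-> /yz->.
Qed.

Lemma tree_of_path_sorted p y : y != ord0 ->
  path (adj (tree_of f)) y p -> uniq (f y :: y :: p) ->
  path (fun a b : 'I_n.+1 => a < b) y p.
Proof.
(* The walk never steps back to the parent, so each step goes down to a child. *)
elim: p y => //= z p IHp y y0 /andP[yz zp] /and3P[fy_notin y_notin u].
have z_fy : z != f y by apply: contraNneq fy_notin => <-; rewrite !inE eqxx orbT.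
move: yz; rewrite adj_tree_of y0 (negbTE z_fy) /= => /andP[z0 /eqP yfz].
by rewrite yfz parent_fun_lt //= IHp // -yfz y_notin.
Qed.

Lemma tree_of_increasing : increasing_tree (tree_of f).
Proof.
split=> [|[|z p] //]; first exact: tree_of_tree.
rewrite /= adj_tree_of eqxx /= => /andP[/andP[z0 /eqP fz0] zp] u.
by rewrite -ord_neq0 z0 tree_of_path_sorted // -fz0.
Qed.

Lemma tree_parent_tree_of : tree_parent (tree_of f) = f.
Proof.
apply/ffunP => v; rewrite ffunE.
have [->|v0] := eqVneq v ord0; first by rewrite parent_fun_root.
case: pickP => [u /andP[/adj_tree_of_lt uv /uv] // | /(_ (f v))].
by rewrite adj_sym adj_tree_of v0 eqxx parent_fun_lt.
Qed.

End TreeOf.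

Section IncreasingTree.

Variables (n : nat) (E : {set {set 'I_n.+1}}).
Hypothesis incE : increasing_tree E.

Lemma increasing_tree_root_path v :
  exists p, [/\ path (adj E) ord0 p, uniq (ord0 :: p), last ord0 p = v &
               sorted (fun a b : 'I_n.+1 => a < b) (ord0 :: p)].
Proof.
have [[_ conn _] sorted_paths] := incE.
have /connectP[p p_path ->] := conn ord0 v.
have [q q_path q_uniq _] := shortenP p_path.
by exists q; split; rewrite ?sorted_paths.
Qed.

Lemma lower_neighbor_exists v : v != ord0 -> exists2 u, adj E u v & u < v.
Proof.
move=> v0; have [p [p_path _ p_last p_sorted]] := increasing_tree_root_path v.
rewrite -{}p_last in v0 *.
case/lastP: p p_path p_sorted v0 => [|q u]; first by move=> _ _ /eqP.
rewrite last_rcons /= !rcons_path => /andP[_ uv] /andP[_ lt_uv] _.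
by exists (last ord0 q).
Qed.

Lemma lower_neighbor_le u1 u2 v :
  adj E u1 v -> u1 < v -> adj E u2 v -> u2 < v -> u2 <= u1.
Proof.
move=> u1v lt_u1v u2v lt_u2v.
have [p [p_path p_uniq p_last p_sorted]] := increasing_tree_root_path u1.
have [u2_in | u2_notin] := boolP (u2 \in ord0 :: p).
  by rewrite -p_last sorted_le_last.
(* Otherwise the root path to u1 extended by v and u2 would not be increasing. *)
have v_notin : v \notin ord0 :: p.
  by apply: contraTN lt_u1v => /(sorted_le_last p_sorted); rewrite p_last -leqNgt.
have ext_path : path (adj E) ord0 (rcons (rcons p v) u2).
  by rewrite !rcons_path last_rcons p_path p_last u1v adj_sym u2v.
have ext_uniq : uniq (rcons (rcons (ord0 :: p) v) u2).
  rewrite !rcons_uniq p_uniq v_notin mem_rcons in_cons negb_or u2_notin andbT.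
  by rewrite neq_ltn lt_u2v.
have := incE.2 _ ext_path ext_uniq.
by rewrite /= rcons_path last_rcons => /andP[_] /(ltn_trans lt_u2v); rewrite ltnn.
Qed.

Lemma lower_neighbor_uniq u1 u2 v :
  adj E u1 v -> u1 < v -> adj E u2 v -> u2 < v -> u1 = u2.
Proof.
move=> u1v lt_u1v u2v lt_u2v; apply: val_inj; apply/eqP.
by rewrite eqn_leq (lower_neighbor_le u1v lt_u1v u2v lt_u2v)
  (lower_neighbor_le u2v lt_u2v u1v lt_u1v).
Qed.

Lemma tree_parent_lower v : v != ord0 -> adj E (tree_parent E v) v /\ tree_parent E v < v.
Proof.
move=> v0; rewrite ffunE (negbTE v0).
case: pickP => [u /andP[] // | no_lower].
have [u uv lt_uv] := lower_neighbor_exists v0.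
by have := no_lower u; rewrite uv lt_uv.
Qed.

Lemma tree_of_tree_parent : tree_of (tree_parent E) = E.
Proof.
apply/setP => e; apply/imsetP/idP => [[v] | eE].
  by rewrite in_ground => /tree_parent_lower[/andP[_ ev] _] ->; rewrite setUC.
have [[card2 _ _] _] := incE.
have /cards2P[x [y [xy e_xy]]] : #|e| == 2 by rewrite card2.
subst e.
wlog lt_xy : x y xy eE / x < y.
  move=> IH; have [lt | lt | /val_inj eq_xy] := ltngtP x y; first exact: IH.
    by rewrite setUC; apply: IH; rewrite 1?eq_sym 1?setUC.
  by rewrite eq_xy eqxx in xy.
have y0 : y != ord0 by rewrite ord_neq0 (leq_ltn_trans _ lt_xy).
have [py lt_py] := tree_parent_lower y0.
exists y; first by rewrite in_ground.
have xy_adj : adj E x y by rewrite /adj xy eE.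
by rewrite (lower_neighbor_uniq py lt_py xy_adj lt_xy) setUC.
Qed.

End IncreasingTree.

Lemma tree_parent_parent_fun n (E : {set {set 'I_n.+1}}) : parent_fun (tree_parent E).
Proof.
apply/forallP => v; rewrite ffunE; have [//|v0] := eqVneq v ord0.
by case: pickP => [u /andP[_ //] | _] /=; rewrite -ord_neq0.
Qed.

Definition children n (f : {ffun 'I_n.+1 -> 'I_n.+1}) (j : 'I_n.+1) : {set 'I_n.+1} :=
  [set i | (i != ord0) && (f i == j)].

Definition block n (f : {ffun 'I_n.+1 -> 'I_n.+1}) (j : 'I_n.+1) : {set 'I_n.+1} :=
  j |: children f j.

Definition block_root n (f : {ffun 'I_n.+1 -> 'I_n.+1}) (j : 'I_n.+1) : bool :=
  (j != ord0) && ((children f j != set0) || (f j == ord0)).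

Definition partition_of n (f : {ffun 'I_n.+1 -> 'I_n.+1}) : {set {set 'I_n.+1}} :=
  [set block f j | j in [set j | block_root f j]].

Definition partition_parent n (P : {set {set 'I_n.+1}}) : {ffun 'I_n.+1 -> 'I_n.+1} :=
  [ffun i => odflt ord0 [pick j | [exists B in P, (i \in B) && is_min B j && (j != i)]]].

Lemma in_children n (f : {ffun 'I_n.+1 -> 'I_n.+1}) j i :
  (i \in children f j) = (i != ord0) && (f i == j).
Proof. by rewrite inE. Qed.

Lemma in_block n (f : {ffun 'I_n.+1 -> 'I_n.+1}) j i :
  (i \in block f j) = (i == j) || (i \in children f j).
Proof. exact: in_setU1. Qed.

Section PartitionOf.

Variables (n : nat) (f : {ffun 'I_n.+1 -> 'I_n.+1}).
Hypothesis pf : parent_fun f.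

Lemma is_min_block j x : is_min (block f j) x = (x == j).
Proof.
have j_min : is_min (block f j) j.
  rewrite /is_min in_block eqxx; apply/forall_inP => y.
  rewrite in_block in_children => /predU1P[-> // | /andP[y0 /eqP <-]].
  by rewrite ltnW ?parent_fun_lt.
by apply/idP/eqP => [/is_min_uniq/(_ j_min) | ->].
Qed.

Lemma nearly_disjoint_blocks j k :
  block_root f j -> block_root f k -> j != k -> nearly_disjoint (block f j) (block f k).
Proof.
have child_block j' k' : block_root f j' -> k' != ord0 -> j' != k' -> f j' = k' ->
    is_min (block f j') j' && (1 < #|block f j'|) && ~~ is_min (block f k') j'.
  move=> /andP[j0 j_root] k0 jk fj; rewrite !is_min_block eqxx jk andbT /=.
  move: j_root; rewrite fj (negbTE k0) orbF => /set0Pn[y y_child].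
  apply/card_gt1P; exists j', y; rewrite !in_block eqxx y_child orbT; split => //.
  by apply: contraTneq y_child => <-; rewrite in_children j0 /= parent_fun_neq.
move=> j_root k_root jk; have [j0 _] := andP j_root; have [k0 _] := andP k_root.
apply/forall_inP => x /setIP[]; rewrite !in_block !in_children.
case/predU1P => [-> | /andP[x0 /eqP fxj]]; case/predU1P => [xk | /andP[_ /eqP fxk]].
- by rewrite xk eqxx in jk.
- by rewrite child_block.
- by subst x; rewrite orbC child_block // eq_sym.
- by rewrite -fxj fxk eqxx in jk.
Qed.

Lemma block_in_partition_of j : block_root f j -> block f j \in partition_of f.
Proof. by move=> j_root; apply: imset_f; rewrite inE. Qed.

Lemma block_root_parent x : x != ord0 -> f x != ord0 -> block_root f (f x).
Proof.
move=> x0 fx0; rewrite /block_root fx0; apply/orP; left.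
by apply/set0Pn; exists x; rewrite in_children x0 eqxx.
Qed.

Lemma partition_of_linked : linked_partition (partition_of f).
Proof.
have block_ground j : j != ord0 -> block f j \subset ground n.
  move=> j0; apply/subsetP => x; rewrite in_block in_ground in_children.
  by case/predU1P => [-> | /andP[]].
split.
- move=> B /imsetP[j]; rewrite inE => /andP[j0 _] ->; split; last exact: block_ground.
  by apply/set0Pn; exists j; rewrite in_block eqxx.
- apply/eqP; rewrite eqEsubset; apply/andP; split.
    by apply/bigcupsP => B /imsetP[j]; rewrite inE => /andP[j0 _] ->; apply: block_ground.
  apply/subsetP => x; rewrite in_ground => x0.
  have [fx0 | fx_neq0] := eqVneq (f x) ord0.
    apply/bigcupP; exists (block f x); last by rewrite in_block eqxx.
    by apply: block_in_partition_of; rewrite /block_root x0 fx0 eqxx orbT.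
  apply/bigcupP; exists (block f (f x)); last by rewrite in_block in_children x0 eqxx orbT.
  exact/block_in_partition_of/block_root_parent.
- move=> B C /imsetP[j]; rewrite inE => j_root -> /imsetP[k]; rewrite inE => k_root -> jk.
  by apply: nearly_disjoint_blocks => //; apply: contraNneq jk => ->.
Qed.

Lemma partition_parent_partition_of : partition_parent (partition_of f) = f.
Proof.
apply/ffunP => i; rewrite ffunE; case: pickP => [j | no_parent] /=.
  case/exists_inP => B /imsetP[k _ ->]; rewrite is_min_block => /andP[/andP[i_in /eqP->] ki].
  by move: i_in; rewrite in_block in_children eq_sym (negbTE ki) => /andP[_ /eqP].
have [// | fi0] := eqVneq (f i) ord0.
have i0 : i != ord0 by apply: contraNneq fi0 => ->; rewrite parent_fun_root.
case/negbT/negP: (no_parent (f i)); apply/exists_inP; exists (block f (f i)).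
  exact: block_in_partition_of (block_root_parent i0 fi0).
by rewrite in_block in_children i0 eqxx orbT is_min_block eqxx parent_fun_neq.
Qed.

End PartitionOf.

Lemma partition_parent_neq0 n (P : {set {set 'I_n.+1}}) x :
  partition_parent P x != ord0 ->
  exists B, [/\ B \in P, x \in B, is_min B (partition_parent P x) & partition_parent P x != x].
Proof.
rewrite ffunE; case: pickP => [j /exists_inP[B BP /andP[/andP[xB j_min] jx]] _ | //].
by exists B.
Qed.

Section LinkedPartition.

Variables (n : nat) (P : {set {set 'I_n.+1}}).
Hypothesis lpP : linked_partition P.

Lemma linked_mem_neq0 B y : B \in P -> y \in B -> y != ord0.
Proof.
have [blocks _ _] := lpP; move=> /blocks[_ /subsetP B_ground] /B_ground.
by rewrite in_ground.
Qed.

Lemma partition_parent_eq B x m :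
  B \in P -> x \in B -> is_min B m -> x != m -> partition_parent P x = m.
Proof.
have [_ _ nd] := lpP; move=> BP xB m_min xm; rewrite ffunE.
case: pickP => [j /exists_inP[C CP /andP[/andP[xC j_min] jx]] | no_parent] /=.
  have [eq_CB | CB] := eqVneq C B; first by subst C; exact: is_min_uniq j_min m_min.
  have := nearly_disjoint_mem (nd _ _ CP BP CB) xC xB.
  have -> : is_min C x = false by apply: contraNF jx => /(is_min_uniq j_min) ->.
  by have -> : is_min B x = false by apply: contraNF xm => /(is_min_uniq m_min) ->.
case/negbT/negP: (no_parent m); apply/exists_inP; exists B => //.
by rewrite xB m_min eq_sym xm.
Qed.

Lemma linked_block B m : B \in P -> is_min B m -> B = block (partition_parent P) m.
Proof.
have [_ _ nd] := lpP; move=> BP m_min; apply/setP => y.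
rewrite in_block in_children; apply/idP/idP => [yB | ].
  have [// | ym] := eqVneq y m.
  by rewrite (linked_mem_neq0 BP yB) (partition_parent_eq BP yB m_min ym) eqxx.
case/predU1P => [-> | /andP[_ /eqP py]]; first exact: is_min_mem m_min.
have m0 : m != ord0 := linked_mem_neq0 BP (is_min_mem m_min).
rewrite -py in m0; have [C [CP yC pC _]] := partition_parent_neq0 m0.
rewrite py in pC; have [<- // | CB] := eqVneq C B.
have := nearly_disjoint_mem (nd _ _ CP BP CB) (is_min_mem pC) (is_min_mem m_min).
by rewrite m_min pC !andbF.
Qed.

Lemma linked_block_root B m : B \in P -> is_min B m -> block_root (partition_parent P) m.
Proof.
have [_ _ nd] := lpP; move=> BP m_min; have mB := is_min_mem m_min.
rewrite /block_root (linked_mem_neq0 BP mB) /=.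
have [B_gt1 | B_le1] := ltnP 1 #|B|.
  move: B_gt1; rewrite (cardsD1 m B) mB ltnS card_gt0 => /set0Pn[z /setD1P[zm zB]].
  apply/orP; left; apply/set0Pn; exists z.
  by rewrite in_children (linked_mem_neq0 BP zB) (partition_parent_eq BP zB m_min zm) eqxx.
apply/orP; right; apply/negPn/negP => /partition_parent_neq0[C [CP mC pC pm]].
have [eq_CB | CB] := eqVneq C B; first by subst C; rewrite (is_min_uniq pC m_min) eqxx in pm.
have BC : B != C by rewrite eq_sym.
have := nearly_disjoint_mem (nd _ _ BP CP BC) mB mC.
have -> : is_min C m = false by apply: contraNF pm => /(is_min_uniq pC) ->.
by rewrite ltnNge B_le1 !andbF.
Qed.

Lemma partition_parent_parent_fun : parent_fun (partition_parent P).
Proof.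
apply/forallP => i; have [-> | i0] := eqVneq i ord0.
  apply: contraT => /partition_parent_neq0[B [BP iB _ _]].
  by move: (linked_mem_neq0 BP iB); rewrite eqxx.
rewrite ffunE; case: pickP => [j /exists_inP[B BP /andP[/andP[iB j_min] ji]] | _] /=.
  by case/andP: j_min => _ /forall_inP j_le; rewrite ltn_neqAle j_le // andbT; exact: ji.
by rewrite -ord_neq0.
Qed.

Lemma partition_of_partition_parent : partition_of (partition_parent P) = P.
Proof.
have [blocks cover _] := lpP.
apply/setP => B; apply/imsetP/idP => [[j] | BP]; last first.
  have [m m_min] := is_min_exists (proj1 (blocks _ BP)).
  by exists m; rewrite ?inE ?(linked_block_root BP m_min) ?(linked_block BP m_min).
rewrite inE => /andP[j0 j_root] ->; case/orP: j_root => [/set0Pn[y] | /eqP pj0].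
  rewrite in_children => /andP[_ /eqP py]; rewrite -{}py in j0 *.
  case/partition_parent_neq0: j0 => C [CP _ pC _].
  by rewrite -(linked_block CP pC).
have : j \in ground n by rewrite in_ground.
rewrite -cover => /bigcupP[C CP jC]; have [m m_min] := is_min_exists (proj1 (blocks _ CP)).
have [eq_jm | jm] := eqVneq j m; first by subst m; rewrite -(linked_block CP m_min).
move: (linked_mem_neq0 CP (is_min_mem m_min)).
by rewrite -(partition_parent_eq CP jC m_min jm) pj0 eqxx.
Qed.

End LinkedPartition.

Theorem theorem3p2 (n : nat) (hn : 1 <= n) :
  exists f : {P : {set {set 'I_n.+1}} | linked_partition P} ->
             {E : {set {set 'I_n.+1}} | increasing_tree E},
    bijective f.
Proof.
apply: (sig_bijective (F := fun P => tree_of (partition_parent P))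
                      (G := fun E => partition_of (tree_parent E))).
- by move=> P /partition_parent_parent_fun /tree_of_increasing.
- by move=> E _; apply/partition_of_linked/tree_parent_parent_fun.
- move=> P lpP /=.
  by rewrite tree_parent_tree_of ?partition_parent_parent_fun ?partition_of_partition_parent.
- move=> E incE /=.
  by rewrite partition_parent_partition_of ?tree_parent_parent_fun ?tree_of_tree_parent.
Qed.
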